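(* Let $M$ be a real representable (loopless) matroid. Then $M$ is strictly uniformly dense if and only if $M$ has a representation $X$ such that the measure $\mu_X$ on the bases defined by $\mu_X(B)=\det(X_B)^2$ satisfies: $\mu_X(\{B: B\ni e\})$ is the same for all $e\in E$.
   Context: A matroid $M$ on ground set $E$ ($|E|=n$) of rank $k$ is real representable if there is a real full-rank $k\times n$ matrix $X$ (a representation) with columns indexed by $E$ such that a $k$-subset $B$ is a basis iff $\det(X_B)\ne0$, $X_B$ the submatrix on columns $B$. Density $\rho=|E|/k$. $M$ is strictly uniformly dense if $(\rho^{-1},\dots,\rho^{-1})$ lies in the relative interior of the base polytope (convex hull of basis indicator vectors); equivalently there is a measure $\mu$ with $\mu(B)>0$ for every basis such that $\mu(\{B:B\ni e\})$ is independent of $e\in E$. *)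

From HB Require Import structures.
From mathcomp Require Import all_boot all_order all_algebra.
From mathcomp Require Import reals.
Set Implicit Arguments. Unset Strict Implicit. Unset Printing Implicit Defensive.
Import Order.TTheory GRing.Theory Num.Theory.
Local Open Scope ring_scope.

(* Ground set E = 'I_n, a matroid is given by its family of bases
   (subsets of 'I_n).  *)

(* X_B : the k x k submatrix of X : 'M_(k,n) on the columns of B, taken in
   increasing order (enum B).  Only meaningful when #|B| = k. *)
Definition colsubB (R : realType) (k n : nat) (X : 'M[R]_(k, n))
    (B : {set 'I_n}) : 'M[R]_k :=
  \matrix_(i < k, j < k) nth 0 [seq X i c | c <- enum B] j.

Definition is_representation (R : realType) (k n : nat)
    (bases : {set {set 'I_n}}) (X : 'M[R]_(k, n)) : Prop :=
  \rank X = k /\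
  forall B : {set 'I_n},
    B \in bases <-> (#|B| = k /\ \det (colsubB X B) != 0).

Definition real_representable (R : realType) (k n : nat)
    (bases : {set {set 'I_n}}) : Prop :=
  exists X : 'M[R]_(k, n), is_representation bases X.

Definition loopless (n : nat) (bases : {set {set 'I_n}}) : Prop :=
  forall e : 'I_n, exists2 B, B \in bases & e \in B.

(* Strictly uniformly dense: (1/rho,...,1/rho) = (k/n,...,k/n) lies in the
   relative interior of the base polytope conv{1_B : B basis}, i.e. it is a
   convex combination of the basis indicator vectors with all coefficients
   strictly positive. *)
Definition strictly_uniformly_dense (R : realType) (k n : nat)
    (bases : {set {set 'I_n}}) : Prop :=
  exists mu : {set 'I_n} -> R,
    (forall B, B \in bases -> 0 < mu B) /\
    \sum_(B in bases) mu B = 1 /\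
    forall e : 'I_n, \sum_(B in bases | e \in B) mu B = k%:R / n%:R.

Definition muX_elem (R : realType) (k n : nat) (bases : {set {set 'I_n}})
    (X : 'M[R]_(k, n)) (e : 'I_n) : R :=
  \sum_(B in bases | e \in B) (\det (colsubB X B)) ^+ 2.

From HB Require Import structures.
From mathcomp Require Import all_boot all_order all_algebra.
From mathcomp Require Import reals.
From mathcomp Require Import classical_sets functions topology normedtype.
From mathcomp Require Import sequences derive exp realfun.
From mathcomp Require Import lra.
Set Implicit Arguments. Unset Strict Implicit. Unset Printing Implicit Defensive.
Import Order.TTheory GRing.Theory Num.Theory.
Import numFieldNormedType.Exports.
Local Open Scope ring_scope.

(* The marginals of a measure on k-sets add up to k times its mass, so if
   mu_X(B) = det(X_B)^2 has equal marginals, then mu_X normalised to mass 1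
   witnesses strict uniform density.
   Conversely, scaling column e of X by exp(y_e / 2) preserves the matroid and
   multiplies det(X_B)^2 by exp(sum_(e in B) y_e).  With a_B = 1_B - (k/n) 1,
   the rescaled measure has uniform marginals as soon as y is a critical point
   of g(y) = sum_B det(X_B)^2 exp<y, a_B>.  A positive mu with marginals k/n
   satisfies sum_B mu_B a_B = 0, which bounds every <y, a_B> on the sublevel
   set {g <= g(0)}; hence g attains its minimum, at a critical point. *)

Section Sums.
Variable R : realFieldType.

Lemma ler_sum_term (I : finType) (A : {set I}) (F : I -> R) i :
  (forall j, j \in A -> 0 <= F j) -> i \in A -> F i <= \sum_(j in A) F j.
Proof.
move=> F_ge0 Ai; rewrite (bigD1 i) //= lerDl.
by apply: sumr_ge0 => j /andP[Aj _]; exact: F_ge0.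
Qed.

Lemma sumr_centered_indicator (I : finType) (P Q : pred I) (F : I -> R) (c : R) :
  \sum_(i | P i) F i * ((Q i)%:R - c) =
  \sum_(i | P i && Q i) F i - c * \sum_(i | P i) F i.
Proof.
rewrite big_mkcondr mulr_sumr -sumrB; apply: eq_bigr => i _.
by case: (Q i); rewrite mulrBr ?mulr1 ?mulr0 ?sub0r (mulrC c).
Qed.

Lemma sum_marginals_card (n k : nat) (F : {set {set 'I_n}})
    (f : {set 'I_n} -> R) :
  (forall B, B \in F -> #|B| = k) ->
  \sum_(e : 'I_n) \sum_(B in F | e \in B) f B = k%:R * \sum_(B in F) f B.
Proof.
move=> cardF; rewrite (exchange_big_dep (mem F)) /=; last by move=> e B _ /andP[].
rewrite mulr_sumr; apply: eq_bigr => B FB.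
rewrite (eq_bigl (mem B)) => [|e]; last by rewrite /= FB.
by rewrite sumr_const cardF // mulr_natl.
Qed.

End Sums.

Lemma nth_map_mulr (T : Type) (R : pzRingType) (f g : T -> R) (s : seq T) j :
  nth 0 [seq f c * g c | c <- s] j =
  nth 0 [seq f c | c <- s] j * nth 1 [seq g c | c <- s] j.
Proof. by elim: s j => [|x s IHs] [|j] //=; rewrite ?nth_nil mul0r. Qed.

Section ColumnScaling.
Variables (R : realType) (k n : nat) (X : 'M[R]_(k, n)) (d : 'I_n -> R).
Let Xd := X *m diag_mx (\row_c d c).

Lemma det_colsubB_scale (B : {set 'I_n}) : #|B| = k ->
  \det (colsubB Xd B) = \det (colsubB X B) * \prod_(c in B) d c.
Proof.
move=> cardB.
have -> : colsubB Xd B =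
    colsubB X B *m diag_mx (\row_j nth 1 [seq d c | c <- enum B] j).
  apply/matrixP => i j; rewrite mul_mx_diag !mxE -nth_map_mulr.
  by congr nth; apply: eq_map => c; rewrite /Xd mul_mx_diag !mxE.
rewrite det_mulmx det_diag; congr (_ * _).
under eq_bigr do rewrite mxE.
rewrite -[RHS]big_enum -[RHS](big_map d xpredT id) (big_nth 1) size_map -cardE.
by rewrite cardB big_mkord; apply: eq_bigr.
Qed.

Hypothesis d_neq0 : forall c, d c != 0.

Lemma is_representation_scale (bases : {set {set 'I_n}}) :
  is_representation bases X -> is_representation bases Xd.
Proof.
move=> [rankX basesP]; split.
  rewrite mxrankMfree // row_free_unit unitmxE det_diag unitfE.
  by rewrite prodf_seq_neq0; apply/allP => c _; rewrite mxE d_neq0.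
move=> B; rewrite basesP; split=> -[cardB detB]; split => //.
  rewrite det_colsubB_scale // mulf_neq0 // prodf_seq_neq0.
  by apply/allP => c _; rewrite d_neq0 implybT.
by move: detB; rewrite det_colsubB_scale // mulf_eq0 negb_or => /andP[].
Qed.

Lemma muX_elem_scale (bases : {set {set 'I_n}}) e :
  is_representation bases X ->
  muX_elem bases Xd e =
  \sum_(B in bases | e \in B) \det (colsubB X B) ^+ 2 * \prod_(c in B) d c ^+ 2.
Proof.
move=> [_ basesP]; apply: eq_bigr => B /andP[/basesP[cardB _] _].
by rewrite det_colsubB_scale // exprMn prodrXl.
Qed.

End ColumnScaling.

Lemma norm_row_mulmx_le (R : realType) m n (y : 'rV[R]_m) (Q : 'M[R]_(m, n)) M e :
  (forall j, `|y ord0 j| <= M) -> `|(y *m Q) ord0 e| <= M * \sum_j `|Q j e|.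
Proof.
move=> yM; rewrite mxE mulr_sumr; apply: le_trans (ler_norm_sum _ _ _) _.
by apply: ler_sum => j _; rewrite normrM ler_wpM2r.
Qed.

Lemma continuous_min_of_bounded_sublevel (R : realType) n
    (f : 'rV[R]_n -> R) (Rad : 'I_n -> R) :
  continuous f ->
  (forall y, f y <= f 0 -> exists2 z, f z = f y & forall j, `|z ord0 j| <= Rad j) ->
  exists y0, forall y, f y0 <= f y.
Proof.
move=> f_cont sublevel.
pose K := [set z : 'rV[R]_n | forall j, `[- Rad j, Rad j] (z ord0 j)]%classic.
have inK (z : 'rV[R]_n) : (forall j, `|z ord0 j| <= Rad j) -> z \in K.
  by move=> zR; rewrite inE => j; rewrite /= in_itv /= -ler_norml.
have [z0 fz0 z0K] := sublevel 0 (lexx _).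
have [y0 _ y0min] := @compact_EVT_min _ _ f K (ex_intro _ z0 (set_mem (inK _ z0K)))
  (rV_compact (fun j => @segment_compact _ _ _)) (continuous_subspaceT f_cont).
exists y0 => y; have [le_y0|lt_0y] := leP (f y) (f 0).
  by have [z <- zK] := sublevel y le_y0; exact/y0min/inK.
by rewrite -fz0 in lt_0y; apply: le_trans (ltW lt_0y); exact/y0min/inK.
Qed.

Lemma wsum_expR_stationary (R : realType) (I : finType) (P : pred I) (nu b : I -> R) :
  (forall t, \sum_(i | P i) nu i <= \sum_(i | P i) nu i * expR (t * b i)) ->
  \sum_(i | P i) nu i * b i = 0.
Proof.
move=> min0.
pose phi := \sum_(i | P i) (fun s : R => nu i * expR (s * b i)).
have phiE (s : R) : phi s = \sum_(i | P i) nu i * expR (s * b i) by rewrite /phi fct_sumE.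
have dphi (s : R) : is_derive s 1 phi (\sum_(i | P i) nu i * (expR (s * b i) * b i)).
  rewrite /phi; elim/big_ind2: _ => [|f df g dg ? ?|i _]; first exact: is_derive_cst.
    exact: is_deriveD.
  apply: is_deriveZ.
  apply: is_derive1_comp.
  apply: (is_derive_eq (@is_deriveM _ _ id (cst (b i)) s 1 1 0 _ _)).
  by rewrite /= scaler0 add0r [_%:A]mulr1.
have crit : is_derive (0 : R) 1 phi 0.
  apply: (@derive1_at_min _ _ (-1) 1) => [|||t _]; first lra.
  - by move=> t _; case: (dphi t).
  - by rewrite in_itv /=; lra.
  by rewrite !phiE; under eq_bigr do rewrite mul0r expR0 mulr1; exact: min0.
transitivity ('D_1 phi 0); last by case: crit.
have [_ ->] := dphi 0.
by apply: eq_bigr => i _; rewrite mul0r expR0 mul1r.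
Qed.

Section ExpSum.
Variables (R : realType) (n : nat) (I : finType) (P : {set I}).
Variables (w : I -> R) (a : I -> 'I_n -> R).

Let lin i (y : 'rV[R]_n) := \sum_j y ord0 j * a i j.
Let g y := \sum_(i in P) w i * expR (lin i y).

Lemma continuous_expsum : continuous g.
Proof.
apply: continuous_big => [|i _]; first exact: add_continuous.
move=> y; apply: (@continuousM _ _ (cst (w i)) (expR \o lin i)).
  exact: cst_continuous.
apply: continuous_comp; last exact: continuous_expR.
apply: continuous_big y => [|j _]; first exact: add_continuous.
move=> z; apply: (@continuousM _ _ (fun z : 'rV[R]_n => z ord0 j) (cst (a i j))).
  exact: coord_continuous.
exact: cst_continuous.
Qed.

Lemma lin_shift y e t i : lin i (y + t *: delta_mx 0 e) = lin i y + t * a i e.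
Proof.
rewrite /lin; under eq_bigr do rewrite !mxE mulrDl.
rewrite big_split /=; congr (_ + _).
rewrite (bigD1 e) //= eqxx mulr1 big1 ?addr0 // => j /negbTE ->.
by rewrite mulr0 mul0r.
Qed.

Lemma expsum_min_stationary y0 : (forall y, g y0 <= g y) ->
  forall e, \sum_(i in P) w i * expR (lin i y0) * a i e = 0.
Proof.
move=> y0min e; apply: wsum_expR_stationary => t.
have := y0min (y0 + t *: delta_mx 0 e); rewrite /g.
by under [X in _ <= X]eq_bigr do rewrite lin_shift expRD mulrA.
Qed.

Variable mu : I -> R.
Hypothesis w_gt0 : forall i, i \in P -> 0 < w i.
Hypothesis mu_gt0 : forall i, i \in P -> 0 < mu i.
Hypothesis mu_balanced : forall e, \sum_(i in P) mu i * a i e = 0.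

Lemma expsum_sublevel_bounded :
  exists M, forall y, g y <= g 0 -> forall i, i \in P -> `|lin i y| <= M.
Proof.
have g0_ge0 : 0 <= g 0.
  by apply: sumr_ge0 => i Pi; rewrite mulr_ge0 ?expR_ge0 // ltW ?w_gt0.
pose U := \sum_(i in P) g 0 / w i.
have U_ge0 : 0 <= U by apply: sumr_ge0 => i Pi; rewrite divr_ge0 // ltW ?w_gt0.
pose V := \sum_(i in P) (\sum_(j in P) mu j) * U / mu i.
exists (U + V) => y gy i Pi.
have lin_le j : j \in P -> lin j y <= U.
  move=> Pj; have wexp_le : w j * expR (lin j y) <= g 0.
    apply: le_trans gy; apply: (ler_sum_term (F := fun i => w i * expR (lin i y))) => //.
    by move=> l Pl; rewrite mulr_ge0 ?expR_ge0 // ltW ?w_gt0.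
  have := expR_ge1Dx (lin j y).
  have : expR (lin j y) <= g 0 / w j by rewrite ler_pdivlMr ?w_gt0 // mulrC.
  have : g 0 / w j <= U.
    apply: (ler_sum_term (F := fun j => g 0 / w j)) => // l Pl.
    by rewrite divr_ge0 // ltW ?w_gt0.
  lra.
have mu_lin : \sum_(j in P) mu j * lin j y = 0.
  rewrite /lin; under eq_bigr do rewrite mulr_sumr.
  rewrite exchange_big big1 // => e _.
  transitivity (y ord0 e * \sum_(j in P) mu j * a j e); last by rewrite mu_balanced mulr0.
  by rewrite mulr_sumr; apply: eq_bigr => j _; rewrite mulrCA.
have : mu i * (U - lin i y) <= (\sum_(j in P) mu j) * U.
  have -> : (\sum_(j in P) mu j) * U = \sum_(j in P) mu j * (U - lin j y).
    rewrite mulr_suml; under [RHS]eq_bigr do rewrite mulrBr.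
    by rewrite sumrB mu_lin subr0.
  apply: (ler_sum_term (F := fun j => mu j * (U - lin j y))) => // j Pj.
  by rewrite mulr_ge0 ?subr_ge0 ?lin_le // ltW ?mu_gt0.
rewrite -ler_pdivlMl ?mu_gt0 // mulrC => le_V.
have : (\sum_(j in P) mu j) * U / mu i <= V.
  apply: (ler_sum_term (F := fun j => (\sum_(j in P) mu j) * U / mu j)) => // j Pj.
  by rewrite divr_ge0 ?mulr_ge0 // ?sumr_ge0 // => [l Pl|]; rewrite ltW ?mu_gt0.
rewrite ler_norml; have := lin_le i Pi; lra.
Qed.

Lemma expsum_has_min : exists y0, forall y, g y0 <= g y.
Proof.
have [M linM] := expsum_sublevel_bounded.
pose A : 'M[R]_(n, #|P|) := \matrix_(e, j) a (enum_val j) e.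
have linA (y : 'rV[R]_n) i (Pi : i \in P) : lin i y = (y *m A) ord0 (enum_rank_in Pi i).
  by rewrite mxE; apply: eq_bigr => e _; rewrite mxE enum_rankK_in.
(* g y only depends on y *m A, and the projection of y onto the row space of A
   has coordinates bounded in terms of those of y *m A. *)
pose proj (y : 'rV[R]_n) := y *m A *m pinvmx A.
have projA y : proj y *m A = y *m A by apply: mulmxKpV; exact: submxMl.
have g_proj y : g (proj y) = g y.
  by apply: eq_bigr => i Pi; rewrite !(linA _ _ Pi) projA.
apply: (continuous_min_of_bounded_sublevel (Rad := fun e => M * \sum_j `|pinvmx A j e|)).
  exact: continuous_expsum.
move=> y gy; exists (proj y) => // e; apply: norm_row_mulmx_le => j.
by have := linM y gy _ (enum_valP j); rewrite (linA _ _ (enum_valP j)) enum_valK_in.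
Qed.

Lemma expsum_stationary_point :
  exists y, forall e, \sum_(i in P) w i * expR (lin i y) * a i e = 0.
Proof.
have [y0 y0min] := expsum_has_min.
by exists y0; exact: expsum_min_stationary.
Qed.

End ExpSum.

Lemma loopless_basis_exists (R : realType) k n (bases : {set {set 'I_n}})
    (X : 'M[R]_(k, n)) :
  is_representation bases X -> loopless bases -> exists B, B \in bases.
Proof.
move=> [rankX basesP] ll; case: (posnP n) => [n0|n_gt0].
  have k0 : k = 0%N by apply/eqP; rewrite -leqn0 -n0 -rankX rank_leq_col.
  subst n k; exists finset.set0; apply/basesP; split; first by rewrite cards0.
  by rewrite det_mx00 oner_neq0.
by have [B ? _] := ll (Ordinal n_gt0); exists B.
Qed.

Lemma uniform_muX_elem_sud (R : realType) k n (bases : {set {set 'I_n}})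
    (X : 'M[R]_(k, n)) :
  is_representation bases X -> loopless bases ->
  (forall e f, muX_elem bases X e = muX_elem bases X f) ->
  strictly_uniformly_dense R k bases.
Proof.
move=> repX ll muX_eq; have [_ basesP] := repX.
have [B0 B0b] := loopless_basis_exists repX ll.
pose w B := \det (colsubB X B) ^+ 2.
have w_gt0 B : B \in bases -> 0 < w B.
  by move/basesP => [_ detB]; rewrite exprn_even_gt0.
pose W := \sum_(B in bases) w B.
have W_gt0 : 0 < W.
  by apply: lt_le_trans (w_gt0 _ B0b) _; apply: ler_sum_term B0b => B /w_gt0/ltW.
exists (fun B => w B / W); split; [|split].
- by move=> B /w_gt0 wB; rewrite divr_gt0.
- by rewrite -mulr_suml divff // gt_eqF.
move=> e; rewrite -mulr_suml -/(muX_elem bases X e).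
have n_gt0 : (0 < n)%N by apply: leq_ltn_trans (ltn_ord e).
have total : n%:R * muX_elem bases X e = k%:R * W.
  have -> : n%:R * muX_elem bases X e = \sum_(f : 'I_n) muX_elem bases X e.
    by rewrite sumr_const card_ord mulr_natl.
  rewrite -sum_marginals_card => [|B /basesP[]//].
  by apply: eq_bigr => f _; rewrite (muX_eq e f).
have n_neq0 : n%:R != 0 :> R by rewrite pnatr_eq0 -lt0n.
by apply/eqP; rewrite eqr_div ?(lt0r_neq0 W_gt0) // mulrC total.
Qed.

Lemma uniformize_representation (R : realType) k n (bases : {set {set 'I_n}})
    (X : 'M[R]_(k, n)) :
  is_representation bases X -> strictly_uniformly_dense R k bases ->
  exists X' : 'M[R]_(k, n), is_representation bases X' /\
    forall e f, muX_elem bases X' e = muX_elem bases X' f.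
Proof.
move=> repX [mu [mu_gt0 [mu_sum mu_marg]]]; have [_ basesP] := repX.
pose c : R := k%:R / n%:R.
pose w B := \det (colsubB X B) ^+ 2.
pose a (B : {set 'I_n}) (e : 'I_n) := (e \in B)%:R - c.
have w_gt0 B : B \in bases -> 0 < w B.
  by move/basesP => [_ detB]; rewrite exprn_even_gt0.
have mu_balanced e : \sum_(B in bases) mu B * a B e = 0.
  by rewrite sumr_centered_indicator mu_marg mu_sum mulr1 subrr.
have [y y_stat] := expsum_stationary_point w_gt0 mu_gt0 mu_balanced.
pose d j := expR (y ord0 j / 2).
exists (X *m diag_mx (\row_j d j)); split.
  by apply: is_representation_scale repX => j; rewrite gt_eqF ?expR_gt0.
pose nu B := w B * expR (\sum_j y ord0 j * a B j).
pose K := expR (c * \sum_j y ord0 j).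
have muX_scaled e :
    muX_elem bases (X *m diag_mx (\row_j d j)) e = K * (c * \sum_(B in bases) nu B).
  rewrite muX_elem_scale //.
  have wd B : w B * \prod_(j in B) d j ^+ 2 = K * nu B.
    have d_sqr j : d j ^+ 2 = expR (y ord0 j) by rewrite expr2 -expRD -splitr.
    rewrite /nu /a sumr_centered_indicator mulrCA -expRD addrCA subrr addr0 /=.
    by under eq_bigr do rewrite d_sqr; rewrite expR_sum.
  under eq_bigr do rewrite wd.
  rewrite -mulr_sumr; congr (_ * _).
  by apply/eqP; rewrite -subr_eq0 -sumr_centered_indicator; apply/eqP/y_stat.
by move=> e f; rewrite !muX_scaled.
Qed.

Theorem theorem4p6 (R : realType) (k n : nat) (bases : {set {set 'I_n}}) :
  real_representable R k bases ->
  loopless bases ->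
  (strictly_uniformly_dense R k bases <->
   exists X : 'M[R]_(k, n),
     is_representation bases X /\
     forall e f : 'I_n, muX_elem bases X e = muX_elem bases X f).
Proof.
move=> [X repX] ll; split; first exact: uniformize_representation repX.
by move=> [Y [repY muY_eq]]; exact: uniform_muX_elem_sud repY ll muY_eq.
Qed.
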